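(* Let $k \ge 1$ be an integer and let $n > 1$. Let $\mathcal{R}$ be any deterministic algorithm that, given access to an unknown database only through the top-$k$ range-query interface described in the context, always outputs the tuple of the database with the smallest value of $A$. Then there exist a database $D$ of $n$ tuples over the single attribute $A$ and a system ranking function (that is, a rule for choosing which $k$ matching tuples are returned by each overflowing query) such that, on $D$, the algorithm $\mathcal{R}$ issues at least $n/k$ queries before it outputs the tuple with the smallest value of $A$. Equivalently, in the worst case, finding the top-ranked tuple on one attribute through a top-$k$ interface can require as many queries as it takes to retrieve all $n$ tuples.
   Context: A database $D$ is a finite set of tuples with a single ordinal (real-valued) attribute $A$ whose value domain is the open interval $(v_0, v_\infty)$ of the reals, $v_0 < v_\infty$. Distinct tuples have distinct $A$-values. An algorithm may access $D$ only by issuing queries of the form ''SELECT * FROM $D$ WHERE $A \in (v_1, v_2)$'' with $v_0 \le v_1 < v_2 \le v_\infty$. Let $R(q)$ denote the set of tuples whose $A$-value lies in $(v_1, v_2)$. If $|R(q)| \le k$ the interface returns all of $R(q)$. If $|R(q)| > k$ (the query ''overflows'') it returns some $k$ tuples of $R(q)$, chosen by a proprietary system ranking function about which the algorithm knows nothing. This choice is arbitrary and may depend on the previously issued queries. The cost of an algorithm is the number of queries it issues. *)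

From Stdlib Require Import Reals Lra Lia List Sorting.Sorted.
Import ListNotations.
Open Scope R_scope.

(* A tuple is identified with its (distinct) A-value, a real number.
   A database is a finite set of such values, represented canonically as a
   strictly increasing list of reals. *)
Definition database := list R.

Definition in_domain (v0 vinf : R) (D : database) : Prop :=
  Sorted Rlt D /\ forall x, In x D -> v0 < x < vinf.

(* A query "SELECT * FROM D WHERE A in (v1, v2)" is the pair (v1, v2). *)
Definition query := (R * R)%type.

Definition valid_query (v0 vinf : R) (q : query) : Prop :=
  v0 <= fst q /\ fst q < snd q /\ snd q <= vinf.

Definition inside (q : query) (x : R) : bool :=
  if Rlt_dec (fst q) x then (if Rlt_dec x (snd q) then true else false) else false.

Definition matching (D : database) (q : query) : list R := filter (inside q) D.

Definition ranking := list query -> query -> list R.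

Definition valid_ranking (k : nat) (D : database) (rank : ranking) : Prop :=
  forall prev q, (k < length (matching D q))%nat ->
    length (rank prev q) = k /\ Sorted Rlt (rank prev q) /\
    incl (rank prev q) (matching D q).

Definition answer (k : nat) (D : database) (rank : ranking)
    (prev : list query) (q : query) : list R :=
  if (length (matching D q) <=? k)%nat then matching D q else rank prev q.

Inductive step := Ask (q : query) | Output (t : R).
Definition history := list (query * list R).
Definition algorithm := history -> step.

Fixpoint run (alg : algorithm) (k : nat) (D : database) (rank : ranking)
    (fuel : nat) (h : history) : option (R * history) :=
  match fuel with
  | O => None
  | S f =>
      match alg h with
      | Output t => Some (t, h)
      | Ask q => run alg k D rank f (h ++ [(q, answer k D rank (map fst h) q)])
      end
  end.

Definition is_min (D : database) (t : R) : Prop :=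
  In t D /\ forall x, In x D -> t <= x.

Definition always_finds_min (v0 vinf : R) (k : nat) (alg : algorithm) : Prop :=
  forall (D : database) (rank : ranking),
    in_domain v0 vinf D -> D <> [] -> valid_ranking k D rank ->
    exists fuel t h, run alg k D rank fuel [] = Some (t, h) /\
      is_min D t /\ Forall (fun qa => valid_query v0 vinf (fst qa)) h.

(* Answer every query by the k largest matching tuples, and keep the smallest
   tuples "hidden": m of them lie in an interval (v0, l) that no query
   endpoint has split so far, so each query either misses all of them or
   contains all of them.  After a query, shrink l below its endpoints; if the
   query contains the hidden block, reveal just enough of the block's largest
   tuples to fill the k answer slots.  Thus every query reveals at most k
   tuples, while the algorithm cannot name the minimum as long as a tuple
   remains hidden: two placements of the hidden block produce the same
   history but different minima. *)
From Stdlib Require Import Reals List Lra Lia Sorting.Sorted.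
Import ListNotations.
Open Scope R_scope.

Section SortedLists.
Variables (A : Type) (lt : A -> A -> Prop).

Lemma HdRel_of_forall (a : A) (s : list A) :
  (forall y, In y s -> lt a y) -> HdRel lt a s.
Proof. destruct s; constructor; auto with datatypes. Qed.

Lemma Sorted_app (s r : list A) : Sorted lt s -> Sorted lt r ->
  (forall x y, In x s -> In y r -> lt x y) -> Sorted lt (s ++ r).
Proof.
  induction s as [|a s IH]; intros Hs Hr Hsr; simpl; auto.
  apply Sorted_inv in Hs as [Hs Ha].
  constructor; [apply IH; auto with datatypes|].
  destruct s as [|b s]; simpl.
  - apply HdRel_of_forall; auto with datatypes.
  - constructor; exact (HdRel_inv Ha).
Qed.

Lemma Sorted_skipn (i : nat) (s : list A) : Sorted lt s -> Sorted lt (skipn i s).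
Proof.
  revert s; induction i; intros [|a s] Hs; simpl; auto.
  apply IHi, (Sorted_inv Hs).
Qed.

Hypothesis lt_trans : forall x y z, lt x y -> lt y z -> lt x z.

Lemma Sorted_filter (f : A -> bool) (s : list A) : Sorted lt s -> Sorted lt (filter f s).
Proof.
  intros Hs; apply StronglySorted_Sorted.
  apply (Sorted_StronglySorted lt_trans) in Hs.
  induction Hs as [|a s _ IH Ha]; simpl; [constructor|].
  destruct (f a); auto.
  constructor; auto.
  rewrite Forall_forall in *; intros x Hx; apply Ha, (filter_In f x s), Hx.
Qed.

End SortedLists.

Definition lastn (k : nat) (s : list R) : list R := skipn (length s - k) s.

Lemma lastn_app_l (k : nat) (s r : list R) :
  (s = [] \/ (k <= length r)%nat) -> lastn k (s ++ r) = lastn k r.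
Proof.
  unfold lastn; intros [-> | Hk]; [reflexivity|].
  rewrite length_app, skipn_app, skipn_all2 by lia.
  simpl; f_equal; lia.
Qed.

Definition within (lo hi : R) (s : list R) : Prop :=
  Sorted Rlt s /\ forall x, In x s -> lo < x < hi.

Lemma within_nil (lo hi : R) : within lo hi [].
Proof. split; [constructor | intros _ []]. Qed.

Lemma within_app (lo mid hi : R) (s r : list R) : lo <= mid <= hi ->
  within lo mid s -> within mid hi r -> within lo hi (s ++ r).
Proof.
  intros Hmid [Ss Hs] [Sr Hr]; split.
  - apply Sorted_app; auto.
    intros x y Hx Hy; specialize (Hs x Hx); specialize (Hr y Hy); lra.
  - intros x Hx; apply in_app_iff in Hx as [Hx|Hx];
      [specialize (Hs x Hx) | specialize (Hr x Hx)]; lra.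
Qed.

Lemma within_widen (lo hi lo' hi' : R) (s : list R) :
  lo' <= lo -> hi <= hi' -> within lo hi s -> within lo' hi' s.
Proof. intros Hlo Hhi [Ss Hs]; split; auto; intros x Hx; specialize (Hs x Hx); lra. Qed.

Fixpoint points_between (lo hi : R) (j : nat) : list R :=
  match j with
  | O => []
  | S j' => (lo + hi) / 2 :: points_between ((lo + hi) / 2) hi j'
  end.

Lemma points_between_spec (lo hi : R) (j : nat) : lo < hi ->
  within lo hi (points_between lo hi j) /\ length (points_between lo hi j) = j.
Proof.
  revert lo; induction j as [|j IH]; intros lo Hlo; simpl.
  { split; [apply within_nil | reflexivity]. }
  destruct (IH ((lo + hi) / 2)) as [[Ss Hs] Hlen]; [lra|].
  split; [|auto]; split.
  - constructor; auto; apply HdRel_of_forall; intros y Hy; specialize (Hs y Hy); lra.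
  - intros x [<- | Hx]; [lra | specialize (Hs x Hx); lra].
Qed.

(** A query endpoint in [(lo, hi)] would split a block lying there. *)
Definition unsplit (lo hi : R) (q : query) : Prop :=
  (fst q <= lo \/ hi <= fst q) /\ (snd q <= lo \/ hi <= snd q).

Lemma unsplit_below (lo hi : R) (q : query) : lo < hi ->
  exists hi', lo < hi' <= hi /\ unsplit lo hi' q.
Proof.
  intros Hlt.
  assert (gap : forall a b, lo < b -> exists b', lo < b' <= b /\ (a <= lo \/ b' <= a)).
  { intros a b Hb; destruct (Rle_lt_dec a lo) as [Ha|Ha].
    - exists b; split; [lra | now left].
    - exists (Rmin b a); split; [split; [now apply Rmin_glb_lt | apply Rmin_l] | right; apply Rmin_r]. }
  destruct (gap (fst q) hi Hlt) as (h1 & [H1 H1'] & Hq1).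
  destruct (gap (snd q) h1 H1) as (h2 & [H2 H2'] & Hq2).
  exists h2; split; [lra|]; split; [|exact Hq2].
  destruct Hq1; [now left | right; lra].
Qed.

Lemma inside_unsplit (lo hi c x : R) (q : query) : unsplit lo hi q ->
  lo < c < hi -> lo < x < hi -> inside q x = inside q c.
Proof.
  intros [Hf Hs] Hc Hx; unfold inside.
  destruct (Rlt_dec (fst q) x), (Rlt_dec (fst q) c);
    try destruct (Rlt_dec x (snd q)); try destruct (Rlt_dec c (snd q));
    auto; exfalso; destruct Hf, Hs; lra.
Qed.

Lemma matching_unsplit (lo hi c : R) (q : query) (s T : database) :
  unsplit lo hi q -> lo < c < hi -> within lo hi s ->
  matching (s ++ T) q = (if inside q c then s else []) ++ matching T q.
Proof.
  intros Hq Hc [_ Hs]; unfold matching; rewrite filter_app; f_equal.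
  induction s as [|a s IH]; simpl; [now destruct (inside q c)|].
  rewrite IH by auto with datatypes.
  rewrite (inside_unsplit lo hi c a q Hq Hc) by auto with datatypes.
  now destruct (inside q c).
Qed.

Definition rank_largest (k : nat) (D : database) : ranking :=
  fun _ q => lastn k (matching D q).

Lemma answer_rank_largest (k : nat) (D : database) (prev : list query) (q : query) :
  answer k D (rank_largest k D) prev q = lastn k (matching D q).
Proof.
  unfold answer, rank_largest, lastn.
  destruct (Nat.leb_spec (length (matching D q)) k); auto.
  now replace (length (matching D q) - k)%nat with 0%nat by lia.
Qed.

Lemma valid_rank_largest (k : nat) (D : database) :
  Sorted Rlt D -> valid_ranking k D (rank_largest k D).
Proof.
  intros HD prev q Hk; unfold rank_largest, lastn; repeat split.
  - rewrite length_skipn; lia.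
  - apply Sorted_skipn, Sorted_filter, HD; exact Rlt_trans.
  - intros x Hx; rewrite <- (firstn_skipn (length (matching D q) - k)); auto with datatypes.
Qed.

Section Runs.
Variables (alg : algorithm) (k : nat) (D : database) (rank : ranking).

Inductive reachable : history -> Prop :=
| reachable_nil : reachable []
| reachable_ask h q : reachable h -> alg h = Ask q ->
    reachable (h ++ [(q, answer k D rank (map fst h) q)]).

Lemma run_length_le fuel : forall h t h',
  run alg k D rank fuel h = Some (t, h') -> (length h <= length h')%nat.
Proof.
  induction fuel as [|fuel IH]; intros h t h' Hrun; simpl in Hrun; [discriminate|].
  destruct (alg h).
  - apply IH in Hrun; rewrite length_app in Hrun; lia.
  - injection Hrun; intros; subst; lia.
Qed.

Lemma run_deterministic fuel1 : forall fuel2 h r1 r2,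
  run alg k D rank fuel1 h = Some r1 -> run alg k D rank fuel2 h = Some r2 -> r1 = r2.
Proof.
  induction fuel1 as [|fuel1 IH]; intros [|fuel2] h r1 r2 H1 H2; try discriminate.
  simpl in *; destruct (alg h); eauto; congruence.
Qed.

Lemma run_through_reachable h : reachable h -> forall fuel r,
  run alg k D rank fuel [] = Some r -> exists fuel', run alg k D rank fuel' h = Some r.
Proof.
  induction 1 as [|h q _ IH Hq]; intros fuel r Hrun; eauto.
  destruct (IH fuel r Hrun) as [[|fuel'] Hf]; [discriminate|].
  simpl in Hf; rewrite Hq in Hf; eauto.
Qed.

Lemma run_from_reachable h : reachable h -> forall fuel r,
  run alg k D rank fuel h = Some r -> exists fuel', run alg k D rank fuel' [] = Some r.
Proof.
  induction 1 as [|h q _ IH Hq]; intros fuel r Hrun; eauto.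
  apply (IH (S fuel)); simpl; now rewrite Hq.
Qed.

Lemma reachable_length_le h : reachable h -> forall fuel t h',
  run alg k D rank fuel [] = Some (t, h') -> (length h <= length h')%nat.
Proof.
  intros Hr fuel t h' Hrun.
  destruct (run_through_reachable h Hr fuel _ Hrun) as [fuel' Hf].
  exact (run_length_le _ _ _ _ Hf).
Qed.

End Runs.

Section Adversary.
Variables (v0 vinf : R) (k n : nat) (alg : algorithm).
Hypothesis alg_correct : always_finds_min v0 vinf k alg.

Notation reach D := (reachable alg k D (rank_largest k D)).

(** [T] holds the revealed tuples, above [l]; [m] tuples are still hidden in
   [(v0, l)], and the history [h] is the same wherever they are placed. *)
Record adversary_state (T : database) (h : history) (l : R) (m : nat) : Prop := {
  state_hidden_range : v0 < l <= vinf;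
  state_revealed : within l vinf T;
  state_size : (length T + m = n)%nat;
  state_cost : (length T <= k * length h)%nat;
  state_reach : forall Z, within v0 l Z -> length Z = m -> reach (Z ++ T) h }.

Lemma state_domain T h l m Z : adversary_state T h l m ->
  within v0 l Z -> in_domain v0 vinf (Z ++ T).
Proof.
  intros st HZ; pose proof (state_hidden_range _ _ _ _ st).
  apply (within_app v0 l vinf); [lra | exact HZ | exact (state_revealed _ _ _ _ st)].
Qed.

Lemma output_is_min D h t : reach D h -> alg h = Output t ->
  in_domain v0 vinf D -> D <> [] -> is_min D t.
Proof.
  intros Hr Hout HD Hne.
  destruct (alg_correct D (rank_largest k D) HD Hne (valid_rank_largest k D (proj1 HD)))
    as (fuel & t' & h' & Hrun & Hmin & _).
  destruct (run_from_reachable alg k D _ h Hr 1 (t, h)) as [fuel' Hf]; [simpl; now rewrite Hout|].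
  now injection (run_deterministic _ _ _ _ _ _ _ _ _ Hrun Hf) as -> _.
Qed.

Lemma no_output_while_hidden T h l m t : adversary_state T h l (S m) -> alg h <> Output t.
Proof.
  intros st Hout; destruct (state_hidden_range _ _ _ _ st) as [Hl _].
  set (mid := (v0 + l) / 2).
  assert (Hmin : forall Z, within v0 l Z -> length Z = S m -> is_min (Z ++ T) t).
  { intros Z HZ Hlen; apply (output_is_min _ h); auto.
    - exact (state_reach _ _ _ _ st Z HZ Hlen).
    - exact (state_domain T h l (S m) Z st HZ).
    - now destruct Z. }
  destruct (points_between_spec mid l (S m)) as [Hhi Hhi_len]; [unfold mid; lra|].
  destruct (points_between_spec v0 mid (S m)) as [Hlo Hlo_len]; [unfold mid; lra|].
  destruct (Hmin _ (within_widen mid l v0 l _ ltac:(unfold mid; lra) ltac:(lra) Hhi) Hhi_len)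
    as [Ht _].
  destruct (Hmin _ (within_widen v0 mid v0 l _ ltac:(lra) ltac:(unfold mid; lra) Hlo) Hlo_len)
    as [_ Hle].
  destruct (points_between v0 mid (S m)) as [|x Z] eqn:E; [discriminate|].
  pose proof (Hle x (or_introl eq_refl)); pose proof (proj2 Hlo x (or_introl eq_refl)).
  apply in_app_iff in Ht as [Ht|Ht].
  - pose proof (proj2 Hhi t Ht); lra.
  - pose proof (proj2 (state_revealed _ _ _ _ st) t Ht); unfold mid in *; lra.
Qed.

(** The hidden interval shrinks to [(v0, l')] and the newly revealed tuples
   [P] lie just above it. *)
Lemma adversary_step T h l m q : adversary_state T h l (S m) -> alg h = Ask q ->
  exists P l' m' a, adversary_state (P ++ T) (h ++ [(q, a)]) l' m' /\
    forall Z, within v0 l' Z -> length Z = m' -> within v0 l (Z ++ P) /\ length (Z ++ P) = S m.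
Proof.
  intros st Hq; destruct (state_hidden_range _ _ _ _ st) as [Hl Hlv].
  destruct (unsplit_below v0 l q Hl) as (l1 & [Hl1 Hl1l] & Hsplit).
  set (l' := (v0 + l1) / 2).
  set (MT := matching T q).
  set (j := if inside q l' then Nat.min (S m) (k - length MT) else 0%nat).
  set (P := points_between l' l1 j).
  destruct (points_between_spec l' l1 j) as [HP HPlen]; [unfold l'; lra|].
  fold P in HP, HPlen.
  assert (Hj : (j <= S m /\ j <= k)%nat) by (unfold j; destruct (inside q l'); lia).
  assert (Hext : forall Z, within v0 l' Z -> length Z = (S m - j)%nat ->
            within v0 l1 (Z ++ P) /\ length (Z ++ P) = S m).
  { intros Z HZ Hlen; split; [apply (within_app v0 l' l1); auto; unfold l'; lra|].
    rewrite length_app; lia. }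
  exists P, l', (S m - j)%nat, (lastn k (P ++ MT)); split.
  2: { intros Z HZ Hlen; destruct (Hext Z HZ Hlen); split; auto.
       apply (within_widen v0 l1); auto; lra. }
  constructor.
  - unfold l'; lra.
  - apply (within_app l' l1 vinf); [unfold l'; lra | exact HP |].
    apply (within_widen l vinf); [lra | lra | exact (state_revealed _ _ _ _ st)].
  - rewrite length_app, <- (state_size _ _ _ _ st); lia.
  - pose proof (state_cost _ _ _ _ st); rewrite !length_app; simpl; nia.
  - intros Z HZ Hlen; destruct (Hext Z HZ Hlen) as [HZP HZPlen].
    rewrite app_assoc.
    replace (lastn k (P ++ MT)) with (answer k ((Z ++ P) ++ T) (rank_largest k ((Z ++ P) ++ T))
                                        (map fst h) q).
    { apply reachable_ask; auto.
      apply (state_reach _ _ _ _ st); auto; apply (within_widen v0 l1); auto; lra. }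
    rewrite answer_rank_largest, (matching_unsplit v0 l1 l' q (Z ++ P) T Hsplit)
      by (unfold l'; lra || auto).
    fold MT; unfold j in *; destruct (inside q l').
    + rewrite <- app_assoc; apply lastn_app_l.
      destruct Z; [now left | right; cbn [length] in Hlen; rewrite length_app; lia].
    + now subst P.
Qed.

(** Either all tuples get revealed, or the run lasts at least [N] more queries. *)
Lemma adversary_strategy N : forall T h l m, adversary_state T h l m ->
  exists Z, within v0 l Z /\ length Z = m /\
    forall fuel t h', run alg k (Z ++ T) (rank_largest k (Z ++ T)) fuel [] = Some (t, h') ->
      (n <= k * length h' \/ length h + N <= length h')%nat.
Proof.
  induction N as [|N IH]; intros T h l m st.
  all: pose proof (state_hidden_range _ _ _ _ st) as [Hl _].
  all: destruct (points_between_spec v0 l m Hl) as [HZ HZlen].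
  - exists (points_between v0 l m); do 2 (split; auto).
    intros fuel t h' Hrun; right; rewrite Nat.add_0_r.
    exact (reachable_length_le _ _ _ _ _ (state_reach _ _ _ _ st _ HZ HZlen) _ _ _ Hrun).
  - destruct m as [|m].
    { exists (points_between v0 l 0); do 2 (split; auto).
      intros fuel t h' Hrun; left.
      pose proof (reachable_length_le _ _ _ _ _ (state_reach _ _ _ _ st _ HZ HZlen) _ _ _ Hrun).
      pose proof (state_size _ _ _ _ st); pose proof (state_cost _ _ _ _ st); nia. }
    destruct (alg h) as [q|t] eqn:Halg; [|now destruct (no_output_while_hidden T h l m t st)].
    destruct (adversary_step T h l m q st Halg) as (P & l' & m' & a & st' & Hext).
    destruct (IH _ _ _ _ st') as (Z & HZ' & HZlen' & Hrun').
    destruct (Hext Z HZ' HZlen'); exists (Z ++ P); do 2 (split; auto).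
    intros fuel t h' Hrun; rewrite <- app_assoc in Hrun.
    destruct (Hrun' fuel t h' Hrun); [now left | right; rewrite length_app in *; simpl in *; lia].
Qed.

End Adversary.

Lemma ratio_le_of_le_mul (n k m : nat) : (1 <= k)%nat -> (n <= k * m)%nat ->
  INR n / INR k <= INR m.
Proof.
  intros Hk Hn; apply le_INR in Hn; rewrite mult_INR in Hn.
  assert (0 < INR k) by (apply lt_0_INR; lia).
  apply Rmult_le_reg_r with (INR k); auto.
  unfold Rdiv; rewrite Rmult_assoc, Rinv_l; lra.
Qed.

Theorem theorem1 (v0 vinf : R) (k n : nat) (alg : algorithm) :
  v0 < vinf -> (1 <= k)%nat -> (1 < n)%nat ->
  always_finds_min v0 vinf k alg ->
  exists (D : database) (rank : ranking),
    in_domain v0 vinf D /\ length D = n /\ valid_ranking k D rank /\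
    forall fuel t h, run alg k D rank fuel [] = Some (t, h) ->
      INR n / INR k <= INR (length h).
Proof.
  intros Hv Hk _ Halg.
  assert (st : adversary_state v0 vinf k n alg [] [] vinf n).
  { constructor; simpl; auto using within_nil; [lra | lia | intros; constructor]. }
  destruct (adversary_strategy v0 vinf k n alg Halg n _ _ _ _ st) as (Z & HZ & Hlen & Hrun).
  assert (HD : in_domain v0 vinf (Z ++ [])) by exact (state_domain _ _ _ _ _ _ _ _ _ _ st HZ).
  exists (Z ++ []), (rank_largest k (Z ++ [])).
  split; [exact HD|]; split; [now rewrite app_nil_r|].
  split; [exact (valid_rank_largest k _ (proj1 HD))|].
  intros fuel t h Hh; apply ratio_le_of_le_mul; auto.
  destruct (Hrun fuel t h Hh); simpl in *; nia.
Qed.
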